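(* Let $t\ne1$, $u\notin\{0,1,-1\}$ with $V_F(t,\omega(u))>0$, and assume $\mathfrak{g}_{t,u}\in\mathcal{E}(\mathcal{P}_{4,4})$. Then $\mathfrak{g}_{t,u}$ is irreducible in $\mathbb{C}[a,b,c,d]$ and $\mathfrak{g}_{t,u}\notin\Sigma_{4,4}$.
   Context: Variables $a,b,c,d$. Put $s_0=a^4+b^4+c^4+d^4-4abcd$; $s_1=T_{3,1}-12abcd$ with $T_{3,1}=\sum_{i\ne j}x_i^3x_j$; $s_2=\sum_{i<j}x_i^2x_j^2-6abcd$; $s_3=T_{2,1,1}-12abcd$ with $T_{2,1,1}=\sum_i x_i^2\sum_{j<k,\ j,k\ne i}x_jx_k$; $s_4=abcd$ (here $(x_1,x_2,x_3,x_4)=(a,b,c,d)$). Let $\omega(u)=u+\frac1u-2$ and $p^G_0(t,w)=(4t+2)w^2-3(t-1)^2w$, $p^G_1(t,w)=-2(t+1)^2w^2+2(t+1)(t-1)^2w$, $p^G_2(t,w)=4t^2w^2-2(t-1)^2(2t-1)w+2(t-1)^4$, $p^G_3(t,w)=2(t+1)^2w^2-(t-1)^2(t^2+3)w-2(t-1)^4$, $p^G_4(t,w)=2(t-1)^4w^2$, and for $u\ne0$, $\mathfrak{g}_{t,u}=u^2\sum_{i=0}^4p^G_i(t,\omega(u))s_i$. Let $V_F(t,w)=(3+6t-t^2)w^2-6(t-1)^2w$. $\mathcal{P}_{4,4}$ is the cone of real quartic forms in $a,b,c,d$ nonnegative on $\mathbb{R}^4$, $\Sigma_{4,4}$ the cone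 of sums of squares of real quadratic forms; $f\in\mathcal{P}_{4,4}\setminus\{0\}$ is extremal ($f\in\mathcal{E}(\mathcal{P}_{4,4})$) if $f=g+h$ with $g,h\in\mathcal{P}_{4,4}$ forces $g,h\in\mathbb{R}_{\ge0}f$. *)

From HB Require Import structures.
From mathcomp Require Import all_boot all_order all_algebra.
From mathcomp Require Import reals.
From mathcomp Require Import complex.
From mathcomp Require Import mpoly.

Set Implicit Arguments.
Unset Strict Implicit.
Unset Printing Implicit Defensive.

Import Order.TTheory GRing.Theory Num.Theory.
Local Open Scope ring_scope.

Section Forms.
Variable R : realType.

Notation P := {mpoly R[4]}.

(* the variables (x_0,x_1,x_2,x_3) = (a,b,c,d) are 'X_0,...,'X_3 *)
Definition abcd : P := \prod_(i < 4) 'X_i.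

Definition T31 : P := \sum_(i < 4) \sum_(j < 4 | j != i) 'X_i ^+ 3 * 'X_j.

Definition S22 : P := \sum_(i < 4) \sum_(j < 4 | (i < j)%N) 'X_i ^+ 2 * 'X_j ^+ 2.

Definition T211 : P :=
  \sum_(i < 4) ('X_i ^+ 2 *
     \sum_(j < 4) \sum_(k < 4 | [&& (j < k)%N, j != i & k != i]) 'X_j * 'X_k).

Definition s0 : P := \sum_(i < 4) 'X_i ^+ 4 - 4%:R * abcd.
Definition s1 : P := T31 - 12%:R * abcd.
Definition s2 : P := S22 - 6%:R * abcd.
Definition s3 : P := T211 - 12%:R * abcd.
Definition s4 : P := abcd.

Definition omega (u : R) : R := u + u^-1 - 2%:R.

Definition pG0 (t w : R) : R := (4%:R * t + 2%:R) * w ^+ 2 - 3%:R * (t - 1) ^+ 2 * w.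
Definition pG1 (t w : R) : R :=
  - 2%:R * (t + 1) ^+ 2 * w ^+ 2 + 2%:R * (t + 1) * (t - 1) ^+ 2 * w.
Definition pG2 (t w : R) : R :=
  4%:R * t ^+ 2 * w ^+ 2 - 2%:R * (t - 1) ^+ 2 * (2%:R * t - 1) * w
  + 2%:R * (t - 1) ^+ 4.
Definition pG3 (t w : R) : R :=
  2%:R * (t + 1) ^+ 2 * w ^+ 2 - (t - 1) ^+ 2 * (t ^+ 2 + 3%:R) * w
  - 2%:R * (t - 1) ^+ 4.
Definition pG4 (t w : R) : R := 2%:R * (t - 1) ^+ 4 * w ^+ 2.

Definition gform (t u : R) : P :=
  let w := omega u in
  u ^+ 2 *: (pG0 t w *: s0 + pG1 t w *: s1 + pG2 t w *: s2
             + pG3 t w *: s3 + pG4 t w *: s4).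

Definition VF (t w : R) : R :=
  (3%:R + 6%:R * t - t ^+ 2) * w ^+ 2 - 6%:R * (t - 1) ^+ 2 * w.

Definition P44 (f : P) : Prop :=
  f \is 4.-homog /\ forall x : 'I_4 -> R, 0 <= f.@[x].

Definition Sigma44 (f : P) : Prop :=
  exists qs : seq P, all (fun q : P => q \is 2.-homog) qs /\
                     f = \sum_(q <- qs) q ^+ 2.

Definition extremalP44 (f : P) : Prop :=
  [/\ P44 f, f != 0 &
      forall g h : P, P44 g -> P44 h -> f = g + h ->
        (exists2 l : R, 0 <= l & g = l *: f) /\
        (exists2 l : R, 0 <= l & h = l *: f)].

Definition toC (f : P) : {mpoly (complex R)[4]} :=
  map_mpoly (real_complex R) f.

End Forms.

Definition mpoly_irreducible (K : idomainType) (n : nat) (f : {mpoly K[n]}) : Prop :=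
  [/\ f != 0, f \isn't a GRing.unit &
      forall g h : {mpoly K[n]}, f = g * h -> g \is a GRing.unit \/ h \is a GRing.unit].

From HB Require Import structures.
From mathcomp Require Import all_boot all_order all_algebra.
From mathcomp Require Import reals.
From mathcomp Require Import complex.
From mathcomp Require Import mpoly.
From mathcomp Require Import ring lra zify.
Import Order.TTheory GRing.Theory Num.Theory.
Local Open Scope complex_scope.
Local Open Scope ring_scope.

(* The form g = g_{t,u} vanishes at p1 = (1,1,u,u), p2 = (1,u,1,u) and
   p3 = (1,u,u,1), and on each segment [p_i, p_j] it restricts to
   c s^2 (s - 1)^2 with c <> 0.  In a factorization g = G H over C, both
   double zeros of each segment are shared out between G and H, and since
   deg G + deg H = 4, counting degrees along the three segments forces G and H
   to vanish together at p1.  Then the quadratic part of g at p1 is the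
   product of two linear forms, and such a form has no three pairwise
   orthogonal anisotropic directions; but (1,-1,0,0), (0,0,1,-1), (1,1,0,0)
   are such directions for g at p1.  Both nondegeneracy facts come from
   V_F(t, omega u) > 0.  Finally, if g were a sum of squares, extremality
   would make some square q^2 a multiple of g, a factorization with the
   common zero p1. *)

Lemma msize_dhomog_leq (R : nzRingType) n d (P : {mpoly R[n]}) :
  P \is d.-homog -> (msize P <= d.+1)%N.
Proof.
move/dhomogP => dP; rewrite msizeE big_seq.
by elim/big_ind: _ => [//|k l kd ld|m /dP ->]; rewrite ?geq_max ?kd ?ld.
Qed.

Lemma unitr_mpolyE (K : fieldType) n (P : {mpoly K[n]}) :
  (P \is a GRing.unit) = (msize P == 1%N).
Proof.
rewrite unfold_in /=; apply/andP/idP => [[/eqP -> c0]|s1].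
  by rewrite mpolyCK unitfE in c0; rewrite mmeasureC c0.
have PC := msize1_polyC (eq_leq (eqP s1)).
split; first by rewrite {1}PC.
by rewrite unitfE; apply: contraTneq s1 => c0; rewrite PC c0 mmeasureC eqxx.
Qed.

Lemma coefM1 (R : nzRingType) (a b : {poly R}) :
  (a * b)`_1 = a`_0 * b`_1 + a`_1 * b`_0.
Proof. by rewrite coefM !big_ord_recr big_ord0 /= add0r. Qed.

Lemma coefM2 (R : nzRingType) (a b : {poly R}) :
  (a * b)`_2 = a`_0 * b`_2 + a`_1 * b`_1 + a`_2 * b`_0.
Proof. by rewrite coefM !big_ord_recr big_ord0 /= add0r. Qed.

Section LineRestriction.
Context {K : fieldType} {n : nat}.
Implicit Types (P Q G H : {mpoly K[n]}) (p v w : 'I_n -> K).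

Definition mline P p v : {poly K} :=
  mmap (@polyC K) (fun i => (p i)%:P + v i *: 'X) P.

Lemma mlineD P Q p v : mline (P + Q) p v = mline P p v + mline Q p v.
Proof. exact: rmorphD. Qed.

Lemma mlineM P Q p v : mline (P * Q) p v = mline P p v * mline Q p v.
Proof. exact: rmorphM. Qed.

Lemma mlineC c p v : mline c%:MP p v = c%:P.
Proof. exact: mmapC. Qed.

Lemma mlineXU i p v : mline 'X_i p v = (p i)%:P + v i *: 'X.
Proof. by rewrite /mline mmapX mmap1U. Qed.

Lemma eq_mline P {p p' v v'} : p =1 p' -> v =1 v' -> mline P p v = mline P p' v'.
Proof.
move=> pp vv; apply: eq_bigr => m _; congr (_ * _); apply: mmap1_eq => i.
by rewrite pp vv.
Qed.

Lemma mline_horner P p v s : (mline P p v).[s] = P.@[fun i => p i + s * v i].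
Proof.
rewrite /mline /mmap mevalE horner_sum; apply: eq_bigr => m _.
rewrite hornerCM /mmap1 horner_prod; congr (_ * _); apply: eq_bigr => i _.
by rewrite horner_exp hornerD hornerZ hornerC hornerX mulrC.
Qed.

Lemma mline_coef0 P p v : (mline P p v)`_0 = P.@[p].
Proof.
by rewrite -horner_coef0 mline_horner; apply: meval_eq => i; rewrite mul0r addr0.
Qed.

Lemma size_mline P p v : (size (mline P p v) <= msize P)%N.
Proof.
rewrite /mline /mmap (leq_trans (size_sum _ _ _)) //.
apply/bigmax_leqP_seq => m /msize_mdeg_lt mP _; apply: leq_trans mP.
rewrite mul_polyC (leq_trans (size_scale_leq _ _)) // /mmap1 mdegE.
elim/big_ind2: _ => [|q1 k1 q2 k2 le1 le2|i _].
- by rewrite size_poly1.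
- rewrite (leq_trans (size_polyMleq _ _)) //.
  by move: (size q1) (size q2) le1 le2 => a b; lia.
rewrite (leq_trans (size_poly_exp_leq _ _)) // ltnS.
have : (size ((p i)%:P + v i *: 'X)%R <= 2)%N.
  rewrite (leq_trans (size_polyD _ _)) // geq_max (leq_trans (size_polyC_leq1 _)) //=.
  by rewrite (leq_trans (size_scale_leq _ _)) ?size_polyX.
by move: (size _) => k; nia.
Qed.

Lemma mline_coef1D P p v w :
  (mline P p (fun i => v i + w i))`_1 = (mline P p v)`_1 + (mline P p w)`_1.
Proof.
pose D Q := (mline Q p (fun i => v i + w i))`_1 = (mline Q p v)`_1 + (mline Q p w)`_1.
have DC c : D c%:MP by rewrite /D !mlineC coefC addr0.
have DD Q1 Q2 : D Q1 -> D Q2 -> D (Q1 + Q2).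
  by rewrite /D !mlineD !coefD => -> ->; rewrite addrACA.
have DM Q1 Q2 : D Q1 -> D Q2 -> D (Q1 * Q2).
  by rewrite /D !mlineM !coefM1 !mline_coef0 => -> ->; rewrite mulrDr mulrDl addrACA.
have DX i : D 'X_i.
  by rewrite /D !mlineXU !coefD !coefC !coefZ !coefX /= !add0r !mulr1.
rewrite -/(D P) [P]mpolyE; elim/big_ind: _ => [|//|m _]; first by rewrite -mpolyC0.
rewrite -mul_mpolyC mpolyXE_id; apply: (DM) => //.
elim/big_ind: _ => [|//|i _]; first by rewrite -mpolyC1.
by elim: (m i) => [|k IH]; rewrite ?expr0 -?mpolyC1 // exprS; apply: DM.
Qed.

Lemma mline_coef2M_root G H p v : G.@[p] = 0 -> H.@[p] = 0 ->
  (mline (G * H) p v)`_2 = (mline G p v)`_1 * (mline H p v)`_1.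
Proof.
by move=> G0 H0; rewrite mlineM coefM2 !mline_coef0 G0 H0 mul0r mulr0 add0r addr0.
Qed.

End LineRestriction.

Lemma split_form_no_orthogonal_triple (R : comNzRingType) (a1 a2 a3 b1 b2 b3 : R) :
  (a1 + a2) * (b1 + b2) = a1 * b1 + a2 * b2 ->
  (a1 + a3) * (b1 + b3) = a1 * b1 + a3 * b3 ->
  (a2 + a3) * (b2 + b3) = a2 * b2 + a3 * b3 ->
  2%:R * (a1 * b1 * (a2 * b2) * (a3 * b3)) = 0.
Proof.
have cross (x1 x2 y1 y2 : R) : (x1 + x2) * (y1 + y2) = x1 * y1 + x2 * y2 ->
    x2 * y1 = - (x1 * y2).
  move=> e; apply/eqP; rewrite -subr_eq0 opprK.
  have -> : x2 * y1 + x1 * y2 = (x1 + x2) * (y1 + y2) - (x1 * y1 + x2 * y2) by ring.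
  by rewrite e subrr.
move=> /cross e12 /cross e13 /cross e23.
transitivity (a1 * b2 * (a2 * b3) * (a3 * b1) + a2 * b1 * (a3 * b2) * (a1 * b3)).
  by ring.
by rewrite e12 e13 e23; ring.
Qed.

Section DoubleZeros.
Context {K : fieldType} {n : nat}.
Implicit Types (P G H : {mpoly K[n]}) (p q v : 'I_n -> K) (g h : {poly K}).

(* When [g * h] has a double root at [r], the number of these two roots that
   [g] carries, read off from [a = g.[r]] and [b = h.[r]]. *)
Definition root_share (a b : K) : nat :=
  if a == 0 then (if b == 0 then 1 else 2) else 0.

Lemma root_share_eq1 (a b : K) :
  (root_share a b == 1%N) = (a == 0) && (b == 0).
Proof. by rewrite /root_share; case: (a == 0); case: (b == 0). Qed.

Lemma dvdp_root_share {g h r} : ('X - r%:P) ^+ 2 %| g * h ->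
  ('X - r%:P) ^+ root_share g.[r] h.[r] %| g /\
  ('X - r%:P) ^+ (2 - root_share g.[r] h.[r]) %| h.
Proof.
rewrite /root_share => dvd2.
have [g0|g0] := eqVneq g.[r] 0; [have [h0|h0] := eqVneq h.[r] 0|].
- by rewrite !expr1 !dvdp_XsubCl /root g0 h0.
- split; last by rewrite expr0 dvd1p.
  have coph : coprimep ('X - r%:P) h by rewrite coprimep_sym coprimep_XsubC rootE.
  by rewrite -(Gauss_dvdpl _ (coprimep_expl 2 coph)).
- split; first by rewrite expr0 dvd1p.
  have copg : coprimep ('X - r%:P) g by rewrite coprimep_sym coprimep_XsubC rootE.
  by rewrite -(Gauss_dvdpr _ (coprimep_expl 2 copg)).
Qed.

Lemma size_mult_roots2 {g a b r1 r2} : g != 0 -> r1 != r2 ->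
  ('X - r1%:P) ^+ a %| g -> ('X - r2%:P) ^+ b %| g -> (a + b < size g)%N.
Proof.
move=> g0 r12 ga gb.
have cop : coprimep (('X - r1%:P) ^+ a) (('X - r2%:P) ^+ b).
  by apply/coprimep_expl/coprimep_expr/coprimep_XsubC2; rewrite subr_eq0 eq_sym.
have dvd : ('X - r1%:P) ^+ a * ('X - r2%:P) ^+ b %| g by rewrite Gauss_dvdp // ga gb.
have := dvdp_leq g0 dvd.
by rewrite size_mul ?expf_neq0 ?polyXsubC_eq0 // !size_exp_XsubC addSn addnS.
Qed.

Definition double_zero_segment P p q :=
  exists2 c : K, c != 0 &
    mline P p (fun i => q i - p i) = c *: ('X^2 * ('X - 1) ^+ 2).

Lemma size_double_zero (c : K) : c != 0 -> size (c *: ('X^2 * ('X - 1) ^+ 2)) = 5%N.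
Proof.
move=> c0; rewrite size_scale // size_mul ?expf_neq0 ?polyX_eq0 ?polyXsubC_eq0 //.
by rewrite size_polyXn -polyC1 size_exp_XsubC.
Qed.

Lemma msize_double_zero_segment {P p q} : double_zero_segment P p q -> (5 <= msize P)%N.
Proof. by case=> c c0 E; rewrite -(size_double_zero c c0) -E size_mline. Qed.

Lemma double_zero_segment_factors {G H p q} : double_zero_segment (G * H) p q ->
  (root_share G.@[p] H.@[p] + root_share G.@[q] H.@[q] < msize G)%N /\
  ((2 - root_share G.@[p] H.@[p]) + (2 - root_share G.@[q] H.@[q]) < msize H)%N.
Proof.
case=> c c0; rewrite mlineM; set g := mline G _ _; set h := mline H _ _ => E.
have at0 Q : (mline Q p (fun i => q i - p i)).[0] = Q.@[p].
  by rewrite mline_horner; apply: meval_eq => i; rewrite mul0r addr0.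
have at1 Q : (mline Q p (fun i => q i - p i)).[1] = Q.@[q].
  by rewrite mline_horner; apply: meval_eq => i; rewrite mul1r addrC subrK.
have gh0 : g * h != 0 by rewrite -size_poly_eq0 E size_double_zero.
have [dvd0 dvd1] : ('X - 0%:P) ^+ 2 %| g * h /\ ('X - 1%:P) ^+ 2 %| g * h.
  by rewrite E !dvdpZr // subr0 polyC1; split; [apply: dvdp_mulr | apply: dvdp_mull].
have [g_p h_p] := dvdp_root_share dvd0; have [g_q h_q] := dvdp_root_share dvd1.
rewrite !at0 in g_p h_p; rewrite !at1 in g_q h_q.
have r01 : (0 : K) != 1 by rewrite eq_sym oner_eq0.
move: gh0; rewrite mulf_eq0 negb_or => /andP [g0 h0].
split.
- exact: leq_trans (size_mult_roots2 g0 r01 g_p g_q) (size_mline _ _ _).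
- exact: leq_trans (size_mult_roots2 h0 r01 h_p h_q) (size_mline _ _ _).
Qed.

Lemma double_zero_triangle_factor_unit G H p1 p2 p3 : (msize (G * H) <= 5)%N ->
  double_zero_segment (G * H) p1 p2 -> double_zero_segment (G * H) p1 p3 ->
  double_zero_segment (G * H) p2 p3 -> ~ (G.@[p1] = 0 /\ H.@[p1] = 0) ->
  G \is a GRing.unit \/ H \is a GRing.unit.
Proof.
move=> le5 d12 d13 d23 nz1.
have share1 : root_share G.@[p1] H.@[p1] != 1%N.
  by rewrite root_share_eq1; apply/negP => /andP [/eqP G0 /eqP H0]; apply: nz1.
have GH0 : G * H != 0.
  by rewrite -msize_poly_eq0 -lt0n (leq_trans _ (msize_double_zero_segment d12)).
have G0 : G != 0 by apply: contraNneq GH0 => ->; rewrite mul0r.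
have H0 : H != 0 by apply: contraNneq GH0 => ->; rewrite mulr0.
rewrite !unitr_mpolyE; have [|sG] := eqVneq (msize G) 1%N; first by left.
have [|sH] := eqVneq (msize H) 1%N; first by right.
rewrite msizeM // in le5.
have [x1 y1] := double_zero_segment_factors d12.
have [x2 y2] := double_zero_segment_factors d13.
have [x3 y3] := double_zero_segment_factors d23.
have shares (x y : K) : (root_share x y <= 2)%N.
  by rewrite /root_share; case: (x == 0); case: (y == 0).
have := shares G.@[p1] H.@[p1]; have := shares G.@[p2] H.@[p2]; have := shares G.@[p3] H.@[p3].
move: G0 H0 sG sH share1 x1 y1 x2 y2 x3 y3 le5; rewrite -!msize_poly_eq0.
move: (root_share _ _) (root_share _ _) (root_share _ _) (msize G) (msize H).
(* The six bounds add up to msize G + msize H >= 6, so they are all equalities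
   and msize G = 2 * share + 1 at each vertex, forcing the share at p1 to be 1. *)
move=> a b c m k; lia.
Qed.

Lemma common_zero_hessian {G H p} v1 v2 v3 : G.@[p] = 0 -> H.@[p] = 0 ->
  let Q v := (mline (G * H) p v)`_2 in
  Q (fun i => v1 i + v2 i) = Q v1 + Q v2 -> Q (fun i => v1 i + v3 i) = Q v1 + Q v3 ->
  Q (fun i => v2 i + v3 i) = Q v2 + Q v3 -> 2%:R * (Q v1 * Q v2 * Q v3) = 0.
Proof.
move=> Gp Hp Q; rewrite /Q !mline_coef2M_root // !mline_coef1D.
exact: split_form_no_orthogonal_triple.
Qed.

End DoubleZeros.

Section LineRestrictionMap.
Context {K L : fieldType} (f : {rmorphism K -> L}) {n : nat}.
Implicit Types (P : {mpoly K[n]}) (p v : 'I_n -> K).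

Lemma msize_map_mpoly P : msize (map_mpoly f P) = msize P.
Proof. by rewrite !msizeE (perm_big _ (msupp_map_mpoly _ (fmorph_inj f))). Qed.

Lemma meval_map P p : f P.@[p] = (map_mpoly f P).@[fun i => f (p i)].
Proof.
rewrite !mevalE (perm_big _ (msupp_map_mpoly _ (fmorph_inj f))) rmorph_sum.
apply: eq_bigr => m _; rewrite mcoeff_map_mpoly rmorphM rmorph_prod.
by congr (_ * _); apply: eq_bigr => i _; rewrite rmorphXn.
Qed.

Lemma mline_map P p v :
  mline (map_mpoly f P) (fun i => f (p i)) (fun i => f (v i)) = map_poly f (mline P p v).
Proof.
rewrite /mline /mmap (perm_big _ (msupp_map_mpoly _ (fmorph_inj f))) rmorph_sum.
apply: eq_bigr => m _; rewrite mcoeff_map_mpoly rmorphM /=.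
congr (_ * _); first by rewrite map_polyC.
rewrite /mmap1 rmorph_prod; apply: eq_bigr => i _.
by rewrite rmorphXn rmorphD /= map_polyC map_polyZ map_polyX.
Qed.

Lemma double_zero_segment_map {P p q} : double_zero_segment P p q ->
  double_zero_segment (map_mpoly f P) (fun i => f (p i)) (fun i => f (q i)).
Proof.
case=> c c0 E; exists (f c); first by rewrite fmorph_eq0.
rewrite (@eq_mline _ _ _ _ (fun i => f (p i)) _ (fun i => f (q i - p i))) //; last first.
  by move=> i; rewrite rmorphB.
by rewrite mline_map E map_polyZ rmorphM /= map_polyXn rmorphXn rmorphB /= map_polyX rmorph1.
Qed.
End LineRestrictionMap.

Lemma poly_eq_horner (R : numDomainType) (p q : {poly R}) :
  (forall x, p.[x] = q.[x]) -> p = q.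
Proof.
move=> pq; apply/eqP; rewrite -subr_eq0; apply/eqP.
apply: (@roots_geq_poly_eq0 _ _ [seq k%:R | k <- iota 0 (size (p - q))]).
- by apply/allP => x _; rewrite rootE hornerD hornerN pq subrr.
- by rewrite map_inj_uniq ?iota_uniq // => i j /eqP; rewrite eqr_nat => /eqP.
- by rewrite size_map size_iota.
Qed.

Section GForm.
Variable R : realType.
Implicit Types (t u a b c d s : R).

Definition pt a b c d : 'I_4 -> R := nth 0 [:: a; b; c; d].

Lemma pt_lin a b c d a' b' c' d' s :
  (fun i => pt a b c d i + s * pt a' b' c' d' i) =1
  pt (a + s * a') (b + s * b') (c + s * c') (d + s * d').
Proof. by case=> [[|[|[|[|k]]]] ?]. Qed.

Lemma pt_seg a b c d a' b' c' d' s :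
  (fun i => pt a b c d i + s * (pt a' b' c' d' i - pt a b c d i)) =1
  pt (a + s * (a' - a)) (b + s * (b' - b)) (c + s * (c' - c)) (d + s * (d' - d)).
Proof. by case=> [[|[|[|[|k]]]] ?]. Qed.

Definition ptC a b c d : 'I_4 -> complex R := fun i => (pt a b c d i)%:C.

Lemma ptC_add a b c d a' b' c' d' :
  (fun i => ptC a b c d i + ptC a' b' c' d' i) =1 ptC (a + a') (b + b') (c + c') (d + d').
Proof. by move=> i; rewrite /ptC -rmorphD; case: i => [[|[|[|[|k]]]] ?]. Qed.

Ltac eval_mpoly :=
  rewrite ?big_ord_recr ?big_ord0 /=;
  do 3 (rewrite ?(raddfD, raddf0, raddfB) /=; rewrite ?(mevalM, rmorphXn, mevalXU) /=);
  rewrite /pt /=.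

Definition gval t u a b c d : R :=
  let w := omega u in
  let e := a * b * c * d in
  u ^+ 2 * (pG0 t w * (a^+4 + b^+4 + c^+4 + d^+4 - 4%:R * e)
   + pG1 t w * (a^+3*(b+c+d) + b^+3*(a+c+d) + c^+3*(a+b+d) + d^+3*(a+b+c) - 12%:R * e)
   + pG2 t w * (a^+2*b^+2 + a^+2*c^+2 + a^+2*d^+2 + b^+2*c^+2 + b^+2*d^+2 + c^+2*d^+2
                - 6%:R * e)
   + pG3 t w * (a^+2*(b*c+b*d+c*d) + b^+2*(a*c+a*d+c*d) + c^+2*(a*b+a*d+b*d)
                + d^+2*(a*b+a*c+b*c) - 12%:R * e)
   + pG4 t w * e).

Lemma gform_pt t u a b c d : (gform t u).@[pt a b c d] = gval t u a b c d.
Proof.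
have nat_eval (k : nat) : (k%:R : {mpoly R[4]}).@[pt a b c d] = k%:R.
  by rewrite raddfMn /= meval1.
have e4 : (\sum_(i < 4) 'X_i ^+ 4 : {mpoly R[4]}).@[pt a b c d] = a^+4 + b^+4 + c^+4 + d^+4.
  by eval_mpoly; ring.
have e1111 : (abcd R).@[pt a b c d] = a * b * c * d.
  by rewrite /abcd rmorph_prod /= !big_ord_recr big_ord0 /= !mevalXU mul1r.
have e31 : (T31 R).@[pt a b c d] =
    a^+3*(b+c+d) + b^+3*(a+c+d) + c^+3*(a+b+d) + d^+3*(a+b+c).
  by rewrite /T31; under eq_bigr do rewrite big_mkcond; eval_mpoly; ring.
have e22 : (S22 R).@[pt a b c d] =
    a^+2*b^+2 + a^+2*c^+2 + a^+2*d^+2 + b^+2*c^+2 + b^+2*d^+2 + c^+2*d^+2.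
  by rewrite /S22; under eq_bigr do rewrite big_mkcond; eval_mpoly; ring.
have e211 : (T211 R).@[pt a b c d] = a^+2*(b*c+b*d+c*d) + b^+2*(a*c+a*d+c*d)
    + c^+2*(a*b+a*d+b*d) + d^+2*(a*b+a*c+b*c).
  rewrite /T211; under eq_bigr do under eq_bigr do rewrite big_mkcond.
  by eval_mpoly; ring.
rewrite /gform /gval /s0 /s1 /s2 /s3 /s4 /=.
do 3 (rewrite ?(mevalZ, raddfD, raddfB, raddfN) /=).
by rewrite !mevalM !nat_eval e4 e1111 e31 e22 e211; ring.
Qed.

Definition seg_coef t u : R :=
  2%:R * u ^+ 2 * (u - 1) ^+ 4 * (2%:R * (t + 1) * omega u - (t - 1) ^+ 2) ^+ 2.

Ltac gval_field := rewrite /gval /seg_coef /pG0 /pG1 /pG2 /pG3 /pG4 /omega; field.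


(* The coefficients of s^2 and s^3 in gval at p1 + s v, recovered from s = 1
   and s = -1: the expansion has no terms of degree 0 and 1, since p1 is a
   singular zero of g. *)
Definition hess t u a b c d : R :=
  (gval t u (1 + a) (1 + b) (u + c) (u + d) + gval t u (1 - a) (1 - b) (u - c) (u - d)) / 2%:R
  - gval t u a b c d.

Definition cubic_coef t u a b c d : R :=
  (gval t u (1 + a) (1 + b) (u + c) (u + d) - gval t u (1 - a) (1 - b) (u - c) (u - d)) / 2%:R.

Lemma gval_expand_p1 t u a b c d s : u != 0 ->
  gval t u (1 + s * a) (1 + s * b) (u + s * c) (u + s * d) =
  hess t u a b c d * s ^+ 2 + cubic_coef t u a b c d * s ^+ 3 + gval t u a b c d * s ^+ 4.
Proof. by move=> u0; rewrite /hess /cubic_coef; gval_field. Qed.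

Lemma gval_p1 t u : u != 0 -> gval t u 1 1 u u = 0.
Proof. by move=> u0; gval_field. Qed.

Lemma hess_v1 t u : u != 0 ->
  hess t u 1 (-1) 0 0 = 2%:R * VF t (omega u) * u ^+ 2 * ((t + 1) * u - 2%:R) ^+ 2.
Proof. by move=> u0; rewrite /hess /VF; gval_field. Qed.

Lemma hess_v2 t u : u != 0 ->
  hess t u 0 0 1 (-1) = 2%:R * VF t (omega u) * u ^+ 2 * (2%:R * u - (t + 1)) ^+ 2.
Proof. by move=> u0; rewrite /hess /VF; gval_field. Qed.

Lemma hess_v3 t u : u != 0 ->
  hess t u 1 1 0 0 = 2%:R * u ^+ 2 * (t - 1) ^+ 4 * (1 - u ^+ 2) ^+ 2.
Proof. by move=> u0; rewrite /hess; gval_field. Qed.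

Lemma hess_v12 t u : u != 0 ->
  hess t u 1 (-1) 1 (-1) = hess t u 1 (-1) 0 0 + hess t u 0 0 1 (-1).
Proof. by move=> u0; rewrite /hess; gval_field. Qed.

Lemma hess_v13 t u : u != 0 ->
  hess t u 2%:R 0 0 0 = hess t u 1 (-1) 0 0 + hess t u 1 1 0 0.
Proof. by move=> u0; rewrite /hess; gval_field. Qed.

Lemma hess_v23 t u : u != 0 ->
  hess t u 1 1 1 (-1) = hess t u 0 0 1 (-1) + hess t u 1 1 0 0.
Proof. by move=> u0; rewrite /hess; gval_field. Qed.

Lemma VF_neq_opp_sqr {t w} : 0 < VF t w -> forall x, VF t w != - x ^+ 2.
Proof. by move=> VF0 x; apply/eqP => VFx; have := sqr_ge0 x; lra. Qed.

Lemma seg_coef_neq0 t u : u != 0 -> u != 1 -> 0 < VF t (omega u) -> seg_coef t u != 0.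
Proof.
move=> u0 u1 /VF_neq_opp_sqr VF0.
have e0 : 2%:R * (t + 1) * omega u - (t - 1) ^+ 2 != 0.
  apply: contra (VF0 (omega u * (t + 3%:R))) => /eqP e.
  rewrite /VF; have -> : (t - 1) ^+ 2 = 2%:R * (t + 1) * omega u.
    by apply/eqP; rewrite eq_sym -subr_eq0 e.
  by apply/eqP; ring.
by rewrite /seg_coef !mulf_neq0 ?expf_neq0 ?pnatr_eq0 // subr_eq0.
Qed.

Lemma hess_prod_neq0 t u : t != 1 -> u != 0 -> u != 1 -> u != -1 ->
  0 < VF t (omega u) -> hess t u 1 (-1) 0 0 * hess t u 0 0 1 (-1) * hess t u 1 1 0 0 != 0.
Proof.
move=> t1 u0 u1 um1 VF0; have VFx := VF_neq_opp_sqr VF0.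
rewrite hess_v1 // hess_v2 // hess_v3 //.
have f1 : (t + 1) * u - 2%:R != 0.
  apply: contra (VFx (2%:R * (u - 1) ^+ 2 * (u + 1) / u ^+ 2)).
  rewrite subr_eq0 => /eqP tu.
  have -> : t = 2%:R / u - 1 by rewrite -tu mulfK // addrK.
  by apply/eqP; rewrite /VF /omega; field.
have f2 : 2%:R * u - (t + 1) != 0.
  apply: contra (VFx (2%:R * (u - 1) ^+ 2 * (u + 1) / u)).
  rewrite subr_eq0 => /eqP tu.
  have -> : t = 2%:R * u - 1 by rewrite tu addrK.
  by apply/eqP; rewrite /VF /omega; field.
have f3 : 1 - u ^+ 2 != 0.
  by rewrite subr_eq0 eq_sym sqrf_eq1 negb_or u1.
by rewrite !mulf_neq0 ?expf_neq0 ?pnatr_eq0 ?(gt_eqF VF0) // subr_eq0.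
Qed.

Lemma mline_gform_p1 t u a b c d : u != 0 ->
  (mline (gform t u) (pt 1 1 u u) (pt a b c d))`_2 = hess t u a b c d.
Proof.
move=> u0.
have -> : mline (gform t u) (pt 1 1 u u) (pt a b c d) =
    hess t u a b c d *: 'X^2 + cubic_coef t u a b c d *: 'X^3 + gval t u a b c d *: 'X^4.
  apply: poly_eq_horner => s; rewrite mline_horner (meval_eq _ (pt_lin _ _ _ _ _ _ _ _ _)).
  by rewrite gform_pt gval_expand_p1 // !hornerE.
by rewrite !coefD !coefZ !coefXn /= mulr1 !mulr0 !addr0.
Qed.

Lemma gform_double_zero_segment t u a b c d a' b' c' d' :
  (forall s, gval t u (a + s * (a' - a)) (b + s * (b' - b)) (c + s * (c' - c)) (d + s * (d' - d))
     = seg_coef t u * (s ^+ 2 * (s - 1) ^+ 2)) -> seg_coef t u != 0 ->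
  double_zero_segment (gform t u) (pt a b c d) (pt a' b' c' d').
Proof.
move=> seg seg_coef0; exists (seg_coef t u) => //; apply: poly_eq_horner => s.
by rewrite mline_horner (meval_eq _ (pt_seg _ _ _ _ _ _ _ _ _)) gform_pt seg !hornerE.
Qed.

Lemma mline_gformC_p1 t u a b c d : u != 0 ->
  (mline (toC (gform t u)) (ptC 1 1 u u) (ptC a b c d))`_2 = (hess t u a b c d)%:C.
Proof. by move=> u0; rewrite mline_map coef_map mline_gform_p1. Qed.

Lemma gformC_no_common_zero {t u G H} : u != 0 ->
  hess t u 1 (-1) 0 0 * hess t u 0 0 1 (-1) * hess t u 1 1 0 0 != 0 ->
  toC (gform t u) = G * H -> G.@[ptC 1 1 u u] = 0 -> H.@[ptC 1 1 u u] = 0 -> False.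
Proof.
move=> u0 hess0 gGH G0 H0.
have := common_zero_hessian (ptC 1 (-1) 0 0) (ptC 0 0 1 (-1)) (ptC 1 1 0 0) G0 H0.
rewrite /= -gGH !(eq_mline _ (frefl _) (ptC_add _ _ _ _ _ _ _ _)) !mline_gformC_p1 //.
rewrite !addr0 !add0r addNr -[1 + 1]/2%:R hess_v12 // hess_v13 // hess_v23 //.
rewrite -!rmorphD => /(_ erefl erefl erefl) /eqP.
rewrite -!rmorphM -(rmorph_nat (real_complex R)) -rmorphM fmorph_eq0 mulf_eq0.
by rewrite pnatr_eq0 (negbTE hess0).
Qed.

Lemma gform_double_zero_triangle t u : u != 0 -> u != 1 -> 0 < VF t (omega u) ->
  [/\ double_zero_segment (gform t u) (pt 1 1 u u) (pt 1 u 1 u),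
      double_zero_segment (gform t u) (pt 1 1 u u) (pt 1 u u 1) &
      double_zero_segment (gform t u) (pt 1 u 1 u) (pt 1 u u 1)].
Proof.
move=> u0 u1 VF0; have seg_coef0 := seg_coef_neq0 t u u0 u1 VF0.
by split; apply: gform_double_zero_segment seg_coef0 => s; gval_field.
Qed.

Lemma gformC_irreducible t u : t != 1 -> u != 0 -> u != 1 -> u != -1 ->
  0 < VF t (omega u) -> extremalP44 (gform t u) -> mpoly_irreducible (toC (gform t u)).
Proof.
move=> t1 u0 u1 um1 VF0 [[hom _] _ _].
have [d12 d13 d23] := gform_double_zero_triangle t u u0 u1 VF0.
pose g := toC (gform t u).
have d12C : double_zero_segment g (ptC 1 1 u u) (ptC 1 u 1 u) by exact: double_zero_segment_map.
have d13C : double_zero_segment g (ptC 1 1 u u) (ptC 1 u u 1) by exact: double_zero_segment_map.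
have d23C : double_zero_segment g (ptC 1 u 1 u) (ptC 1 u u 1) by exact: double_zero_segment_map.
have g5 := msize_double_zero_segment d12C.
split.
- by rewrite -msize_poly_eq0 -lt0n (leq_trans _ g5).
- by rewrite unitr_mpolyE; apply: contraTN g5 => /eqP ->.
move=> G H gGH; rewrite /g gGH in d12C d13C d23C.
apply: double_zero_triangle_factor_unit d12C d13C d23C _.
  by rewrite -gGH msize_map_mpoly msize_dhomog_leq.
move=> [G0 H0]; apply: (gformC_no_common_zero u0 _ gGH G0 H0).
exact: hess_prod_neq0.
Qed.

Lemma P44_sqr {q : {mpoly R[4]}} : q \is 2.-homog -> P44 (q ^+ 2).
Proof.
by move=> hq; split=> [|x]; [exact: (dhomogMn 2 hq) | rewrite rmorphXn /= sqr_ge0].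
Qed.

Lemma P44_sum_sqr {qs : seq {mpoly R[4]}} : all (fun q => q \is 2.-homog) qs ->
  P44 (\sum_(q <- qs) q ^+ 2).
Proof.
move=> /allP hq; split=> [|x].
  by rewrite big_seq; apply: rpred_sum => q /hq /P44_sqr [].
by rewrite raddf_sum /=; apply: sumr_ge0 => q _; rewrite rmorphXn /= sqr_ge0.
Qed.

Lemma gform_not_sos t u : t != 1 -> u != 0 -> u != 1 -> u != -1 ->
  0 < VF t (omega u) -> extremalP44 (gform t u) -> ~ Sigma44 (gform t u).
Proof.
move=> t1 u0 u1 um1 VF0 [_ g0 ext] [qs [hq gqs]].
have [q qin q0] : exists2 q, q \in qs & q != 0.
  apply/hasP; apply: contraNT g0 => /hasPn qs0; rewrite gqs big_seq big1 // => q /qs0.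
  by rewrite negbK => /eqP ->; rewrite expr0n.
have grem : gform t u = q ^+ 2 + \sum_(r <- rem q qs) r ^+ 2.
  by rewrite gqs (perm_big _ (perm_to_rem qin)) big_cons.
have hrem : all (fun r : {mpoly R[4]} => r \is 2.-homog) (rem q qs).
  by apply/allP => r /mem_rem /(allP hq).
have [[l _ ql] _] := ext _ _ (P44_sqr (allP hq q qin)) (P44_sum_sqr hrem) grem.
have l0 : l != 0.
  by apply: contraNneq q0 => l0; move: ql; rewrite l0 scale0r => /eqP; rewrite sqrf_eq0.
have q_p1 : q.@[pt 1 1 u u] = 0.
  have : (q ^+ 2).@[pt 1 1 u u] = 0 by rewrite ql mevalZ gform_pt gval_p1 // mulr0.
  by rewrite rmorphXn /= => /eqP; rewrite sqrf_eq0 => /eqP.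
have gqq : toC (gform t u) = toC (l^-1 *: q) * toC q.
  have gq : gform t u = (l^-1 *: q) * q by rewrite -scalerAl -expr2 ql scalerA mulVf // scale1r.
  by rewrite gq /toC rmorphM.
have qC_p1 (r : {mpoly R[4]}) : r.@[pt 1 1 u u] = 0 -> (toC r).@[ptC 1 1 u u] = 0.
  by move=> r0; rewrite /toC -meval_map r0 rmorph0.
apply: (gformC_no_common_zero u0 _ gqq); last exact: qC_p1.
- exact: hess_prod_neq0.
- by apply: qC_p1; rewrite mevalZ q_p1 mulr0.
Qed.

End GForm.

Theorem theorem2p6 (R : realType) (t u : R) :
  t != 1 -> u != 0 -> u != 1 -> u != -1 ->
  0 < VF t (omega u) ->
  extremalP44 (gform t u) ->
  mpoly_irreducible (toC (gform t u)) /\ ~ Sigma44 (gform t u).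
Proof.
move=> t1 u0 u1 um1 VF0 ext; split.
- exact: gformC_irreducible.
- exact: gform_not_sos.
Qed.
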